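(* Let $T$ be an order tree of height at most $\omega_1$, $G$ a sparse $T$-graph, $H=G\sharp\mathbb{N}$ its ray inflation, and $0\le i<\omega_1$. Then the map $t\mapsto H[\lfloor t\rfloor\times\mathbb{N}]$, where $\lfloor t\rfloor=\{t'\in T : t\le t'\}$, is a bijection between the level $T^i$ and the set of components of $H-(T^{<i}\times\mathbb{N})$.
   Context: An order tree is a partial order $(T,\le)$ with a unique minimal element (the root) in which every set $\{t' : t'\le t\}$ is well-ordered; the height of $t$ is the order type of $\{t' : t'<t\}$; $T^i$ is the set of points of height $i$ and $T^{<i}=\bigcup_{j<i}T^j$; the height of $T$ is the supremum of the order types of its maximal chains. $t$ is a successor of $t'$ (its predecessor) if $t'<t$ with nothing strictly between; otherwise $t$ is a limit. A $T$-graph is a graph $G$ with $V(G)=T$ whose edges join comparable points and in which for every $t$ the neighbours of $t$ below $t$ (its down-neighbours) are cofinal in $\{s : s<t\}$. $G$ is sparse if the set of down-neighbours of each $t$ has order type $\mathrm{cf}(\{s : s<t\})$; for height at most $\omega_1$, this means a successor's only down-neighbour is its predecessor and a non-root limit's down-neighbours form a cofinal $\omega$-sequence below it. The ray inflation $G\sharp\mathbb{N}$ has vertex set $T\times\mathbb{N}$ and edges: $(t,n)(t,n+1)$ for all $t,n$; $(t,n)(t',n)$ for all $n$ if $t$ is a successor with predecessor $t'$; $(t,n)(t_n,n)$ for all $n$ if $t$ is a non-root limit with down-neighbours $t_0<t_1<\cdots$. $H[X]$ denotes the induced subgraph on $X$. *)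

Set Implicit Arguments.

Section OrderTrees.
Variable T : Type.
Variable le : T -> T -> Prop.

Definition lt (s t : T) : Prop := le s t /\ s <> t.

Definition comparable (s t : T) : Prop := le s t \/ le t s.

Definition minimal (r : T) : Prop := forall s, le s r -> s = r.

Definition well_ordered_on (A : T -> Prop) : Prop :=
  (forall x y, A x -> A y -> comparable x y) /\
  (forall S : T -> Prop, (forall x, S x -> A x) -> (exists x, S x) ->
     exists m, S m /\ forall x, S x -> le m x).

Definition order_tree : Prop :=
  (forall t, le t t) /\
  (forall s t, le s t -> le t s -> s = t) /\
  (forall s t u, le s t -> le t u -> le s u) /\
  (exists r, minimal r /\ forall r', minimal r' -> r' = r) /\
  (forall t, well_ordered_on (fun s => le s t)).

Definition countable_set (A : T -> Prop) : Prop :=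
  exists f : T -> nat, forall x y, A x -> A y -> f x = f y -> x = y.

Definition chain (C : T -> Prop) : Prop :=
  forall x y, C x -> C y -> comparable x y.

Definition maximal_chain (C : T -> Prop) : Prop :=
  chain C /\ forall x, (forall c, C c -> comparable x c) -> C x.

(* Height of T at most omega_1: every maximal chain (a well-order) has order
   type <= omega_1, i.e. each of its proper initial segments is countable. *)
Definition height_le_omega1 : Prop :=
  forall C, maximal_chain C ->
    forall c0, C c0 -> countable_set (fun c => C c /\ lt c c0).

Definition succ_of (p t : T) : Prop :=
  lt p t /\ ~ (exists u, lt p u /\ lt u t).

Definition limit (t : T) : Prop := ~ (exists p, succ_of p t).

Definition nonroot (t : T) : Prop := exists s, lt s t.

Variable E : T -> T -> Prop.

Definition down_nbr (t u : T) : Prop := E u t /\ lt u t.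

Definition T_graph : Prop :=
  (forall s t, E s t -> E t s) /\
  (forall t, ~ E t t) /\
  (forall s t, E s t -> comparable s t) /\
  (forall s t, lt s t -> exists u, down_nbr t u /\ le s u).

Definition strictly_increasing (f : nat -> T) : Prop :=
  forall m n, m < n -> lt (f m) (f n).

Definition down_enum (t : T) (f : nat -> T) : Prop :=
  strictly_increasing f /\ forall u, down_nbr t u <-> exists n, f n = u.

(* Sparse T-graph, for height at most omega_1: the only down-neighbour of a
   successor is its predecessor; the down-neighbours of a non-root limit form
   an omega-sequence (order type omega). *)
Definition sparse : Prop :=
  (forall p t, succ_of p t -> forall u, down_nbr t u <-> u = p) /\
  (forall t, limit t -> nonroot t -> exists f, down_enum t f).

Definition ray_edge0 (x y : T * nat) : Prop :=
  (fst x = fst y /\ snd y = S (snd x)) \/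
  (snd x = snd y /\ succ_of (fst y) (fst x)) \/
  (snd x = snd y /\ limit (fst x) /\ nonroot (fst x) /\
     exists f, down_enum (fst x) f /\ f (snd x) = fst y).

Definition ray_inflation (x y : T * nat) : Prop := ray_edge0 x y \/ ray_edge0 y x.

End OrderTrees.

(* ---- Ordinals below omega_1, represented by countable well-orders ---- *)
Definition wellorder (I : Type) (ltI : I -> I -> Prop) : Prop :=
  (forall x, ~ ltI x x) /\
  (forall x y z, ltI x y -> ltI y z -> ltI x z) /\
  (forall x y, ltI x y \/ x = y \/ ltI y x) /\
  well_founded ltI.

Definition countable_type (I : Type) : Prop :=
  exists f : I -> nat, forall x y, f x = f y -> x = y.

Definition order_iso (X Y : Type) (A : X -> Prop) (ltA : X -> X -> Prop)
  (B : Y -> Prop) (ltB : Y -> Y -> Prop) : Prop :=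
  exists R : X -> Y -> Prop,
    (forall x y, R x y -> A x /\ B y) /\
    (forall x, A x -> exists y, R x y) /\
    (forall y, B y -> exists x, R x y) /\
    (forall x y y', R x y -> R x y' -> y = y') /\
    (forall x x' y, R x y -> R x' y -> x = x') /\
    (forall x y x' y', R x y -> R x' y' -> (ltA x x' <-> ltB y y')).

(* t has height i, i.e. t lies in T^i, where i is the order type of (I, ltI) *)
Definition has_height (T : Type) (le : T -> T -> Prop) (t : T)
  (I : Type) (ltI : I -> I -> Prop) : Prop :=
  order_iso (fun s => lt le s t) (lt le) (fun _ : I => True) ltI.

(* t lies in T^{<i}: its height is the order type of a proper initial segment
   of (I, ltI) *)
Definition height_below (T : Type) (le : T -> T -> Prop) (t : T)
  (I : Type) (ltI : I -> I -> Prop) : Prop :=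
  exists k0 : I, order_iso (fun s => lt le s t) (lt le) (fun k => ltI k k0) ltI.

Inductive reach_in (V : Type) (adj : V -> V -> Prop) (X : V -> Prop) (v : V)
  : V -> Prop :=
| reach_refl : X v -> reach_in adj X v v
| reach_step : forall w w', reach_in adj X v w -> X w' -> adj w w' ->
    reach_in adj X v w'.

Definition is_component (V : Type) (adj : V -> V -> Prop) (X C : V -> Prop)
  : Prop :=
  exists v, X v /\ forall w, C w <-> reach_in adj X v w.

Definition up_times (T : Type) (le : T -> T -> Prop) (t : T) (v : T * nat)
  : Prop := le t (fst v).

From Stdlib Require Import Classical Lia.
Set Implicit Arguments.

(* Heights are compared through order isomorphisms onto initial segments of
   the well-order I; since strictly increasing self-maps of a well-order do
   not descend, a point has at most one height, and a point of height i lies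
   strictly above every point of T^{<i}. Hence every s outside T^{<i} lies
   above a unique t of height i, and conversely the up-set of t is connected
   in H - (T^{<i} x N): each column {s} x N is a ray, a successor column is
   joined to the column of its predecessor at every level, and a limit column
   s is joined at level n to the column of its n-th down-neighbour, which lies
   above t for all large n. Edges of H never leave an up-set downwards without
   entering T^{<i}, so these up-sets are exactly the components. *)

Record iso_rel (X Y : Type) (A : X -> Prop) (ltA : X -> X -> Prop)
    (B : Y -> Prop) (ltB : Y -> Y -> Prop) (R : X -> Y -> Prop) : Prop := {
  iso_dom : forall {x y}, R x y -> A x /\ B y;
  iso_total : forall {x}, A x -> exists y, R x y;
  iso_onto : forall {y}, B y -> exists x, R x y;
  iso_functional : forall {x y y'}, R x y -> R x y' -> y = y';
  iso_injective : forall {x x' y}, R x y -> R x' y -> x = x';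
  iso_lt : forall {x y x' y'}, R x y -> R x' y' -> (ltA x x' <-> ltB y y') }.

Lemma order_isoP X Y (A : X -> Prop) ltA (B : Y -> Prop) ltB :
  order_iso A ltA B ltB <-> exists R, iso_rel A ltA B ltB R.
Proof.
  split.
  - intros [R (? & ? & ? & ? & ? & ?)]. exists R. constructor; assumption.
  - intros [R []]. exists R. tauto.
Qed.

Section WellOrderIso.
Variables (X I : Type) (ltI : I -> I -> Prop).

Lemma iso_rel_restrict (ltA : X -> X -> Prop) (B : I -> Prop) {R u u' j} :
  (forall a b c, ltA a b -> ltA b c -> ltA a c) ->
  (forall a b, ltI a b -> B b -> B a) ->
  iso_rel (fun x => ltA x u') ltA B ltI R -> ltA u u' -> R u j ->
  iso_rel (fun x => ltA x u) ltA (fun k => ltI k j) ltI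
    (fun x k => R x k /\ ltA x u).
Proof.
  intros ltA_trans B_down iso uu' Ruj. constructor.
  - intros x k [Rxk xu]. split; [exact xu|].
    apply (iso_lt iso Rxk Ruj). exact xu.
  - intros x xu. destruct (iso_total iso (ltA_trans _ _ _ xu uu')) as [k Rxk].
    exists k. split; assumption.
  - intros k kj. destruct (iso_onto iso (B_down _ _ kj (proj2 (iso_dom iso Ruj))))
      as [x Rxk].
    exists x. split; [exact Rxk|]. apply (iso_lt iso Rxk Ruj). exact kj.
  - intros x k k' [Rxk _] [Rxk' _]. exact (iso_functional iso Rxk Rxk').
  - intros x x' k [Rxk _] [Rx'k _]. exact (iso_injective iso Rxk Rx'k).
  - intros x k x' k' [Rxk _] [Rx'k' _]. exact (iso_lt iso Rxk Rx'k').
Qed.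

Hypothesis wo : wellorder ltI.

Lemma iso_down_closed_not_initial_seg {A : X -> Prop} {ltA} {B : I -> Prop} {k : I} :
  (forall a b, ltI a b -> B b -> B a) -> B k ->
  order_iso A ltA B ltI -> ~ order_iso A ltA (fun j => ltI j k) ltI.
Proof.
  intros B_down Bk iso1 iso2.
  apply order_isoP in iso1 as [R1 iso1]. apply order_isoP in iso2 as [R2 iso2].
  pose proof wo as (_ & _ & _ & wf).
  (* R2 o R1^-1 is strictly increasing on B, hence never descends *)
  assert (no_descent : forall j, B j -> forall x m, R1 x j -> R2 x m -> ~ ltI m j).
  { intro j. induction (wf j) as [j _ IH]. intros Bj x m R1xj R2xm mj.
    assert (Bm : B m) by exact (B_down _ _ mj Bj).
    destruct (iso_onto iso1 Bm) as [y R1ym].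
    destruct (iso_total iso2 (proj1 (iso_dom iso1 R1ym))) as [m' R2ym'].
    apply (IH m mj Bm y m' R1ym R2ym').
    apply (iso_lt iso2 R2ym' R2xm), (iso_lt iso1 R1ym R1xj). exact mj. }
  destruct (iso_onto iso1 Bk) as [x R1xk].
  destruct (iso_total iso2 (proj1 (iso_dom iso1 R1xk))) as [m R2xm].
  exact (no_descent k Bk x m R1xk R2xm (proj2 (iso_dom iso2 R2xm))).
Qed.

Lemma initial_seg_iso_unique (A : X -> Prop) ltA k k' :
  order_iso A ltA (fun j => ltI j k) ltI ->
  order_iso A ltA (fun j => ltI j k') ltI -> k = k'.
Proof.
  intros iso iso'. pose proof wo as (_ & ltI_trans & ltI_total & _).
  destruct (ltI_total k k') as [kk' | [-> | k'k]]; [exfalso | reflexivity | exfalso].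
  - refine (iso_down_closed_not_initial_seg _ kk' iso' iso). eauto.
  - refine (iso_down_closed_not_initial_seg _ k'k iso iso'). eauto.
Qed.

End WellOrderIso.

Section OrderTree.
Variables (T : Type) (le : T -> T -> Prop).
Hypothesis tree : order_tree le.

Lemma tree_lt_trans a b c : lt le a b -> lt le b c -> lt le a c.
Proof.
  pose proof tree as (_ & le_antisym & le_trans & _).
  intros [ab a_b] [bc b_c]. split; [eauto|].
  intros <-. apply b_c, le_antisym; assumption.
Qed.

Lemma tree_comparable_below {x y s} : le x s -> le y s -> comparable le x y.
Proof. pose proof tree as (_ & _ & _ & _ & wo). apply (proj1 (wo s)). Qed.

Lemma comparable_lt_cases x y :
  comparable le x y -> lt le x y \/ x = y \/ lt le y x.
Proof.
  intros [xy | yx]; destruct (classic (x = y)) as [-> | x_y]; auto.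
  - left. split; assumption.
  - right; right. split; auto.
Qed.

Lemma order_tree_lt_wf : well_founded (lt le).
Proof.
  pose proof tree as (le_refl & le_antisym & le_trans & _ & wo).
  intro s. apply NNPP. intro not_acc.
  destruct (proj2 (wo s) (fun u => le u s /\ ~ Acc (lt le) u)) as (m & [ms m_na] & m_min).
  { intros x [xs _]. exact xs. }
  { exists s. split; [apply le_refl | exact not_acc]. }
  apply m_na. constructor. intros y [ym y_m]. apply NNPP. intro y_na.
  apply y_m, le_antisym; [exact ym | apply m_min; split; eauto].
Qed.

Lemma succ_of_le_pred p s t : succ_of le p s -> lt le t s -> le t p.
Proof.
  intros [ps no_between] ts.
  destruct (comparable_lt_cases (tree_comparable_below (proj1 ts) (proj1 ps)))
    as [tp | [-> | pt]].
  - apply tp.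
  - apply tree.
  - exfalso. apply no_between. exists t. split; assumption.
Qed.

End OrderTree.

Section Heights.
Variables (T : Type) (le : T -> T -> Prop) (I : Type) (ltI : I -> I -> Prop).
Hypotheses (tree : order_tree le) (wo : wellorder ltI).

(* [height_below le u ltI] unfolds to [exists k, height_eq u k]. *)
Definition height_eq (u : T) (k : I) : Prop :=
  order_iso (fun x => lt le x u) (lt le) (fun j => ltI j k) ltI.

Lemma height_eq_lt u u' k' :
  height_eq u' k' -> lt le u u' -> exists k, ltI k k' /\ height_eq u k.
Proof.
  intros hu' uu'. apply order_isoP in hu' as [R iso].
  destruct (iso_total iso uu') as [k Ruk]. exists k.
  split; [exact (proj2 (iso_dom iso Ruk))|].
  apply order_isoP. eexists.
  refine (iso_rel_restrict (@tree_lt_trans _ _ tree) _ iso uu' Ruk).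
  pose proof wo as (_ & ltI_trans & _). eauto.
Qed.

Lemma height_eq_gt u' k k' :
  height_eq u' k' -> ltI k k' -> exists x, lt le x u' /\ height_eq x k.
Proof.
  intros hu' kk'. apply order_isoP in hu' as [R iso].
  destruct (iso_onto iso kk') as [x Rxk]. exists x.
  split; [exact (proj1 (iso_dom iso Rxk))|].
  apply order_isoP. eexists.
  refine (iso_rel_restrict (@tree_lt_trans _ _ tree) _ iso (proj1 (iso_dom iso Rxk)) Rxk).
  pose proof wo as (_ & ltI_trans & _). eauto.
Qed.

Lemma height_eq_fun u k k' : height_eq u k -> height_eq u k' -> k = k'.
Proof. apply initial_seg_iso_unique, wo. Qed.

Lemma height_eq_mono u u' k k' :
  height_eq u k -> height_eq u' k' -> lt le u u' -> ltI k k'.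
Proof.
  intros hu hu' uu'. destruct (height_eq_lt hu' uu') as (j & jk' & hj).
  rewrite (height_eq_fun hu hj). exact jk'.
Qed.

Lemma height_eq_lt_iff x x' k k' : comparable le x x' ->
  height_eq x k -> height_eq x' k' -> (lt le x x' <-> ltI k k').
Proof.
  intros cmp hx hx'. split; [exact (height_eq_mono hx hx')|].
  pose proof wo as (irr & ltI_trans & _). intro kk'.
  destruct (comparable_lt_cases cmp) as [xx' | [<- | x'x]]; [exact xx' | exfalso..].
  - rewrite (height_eq_fun hx hx') in kk'. exact (irr _ kk').
  - exact (irr k (ltI_trans _ _ _ kk' (height_eq_mono hx' hx x'x))).
Qed.

Lemma height_eq_inj x x' k : comparable le x x' ->
  height_eq x k -> height_eq x' k -> x = x'.
Proof.
  intros cmp hx hx'. pose proof wo as (irr & _).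
  destruct (comparable_lt_cases cmp) as [xx' | [-> | x'x]];
    [exfalso | reflexivity | exfalso].
  - exact (irr k (height_eq_mono hx hx' xx')).
  - exact (irr k (height_eq_mono hx' hx x'x)).
Qed.

Lemma heights_below_iso u (B : I -> Prop) :
  (forall x, lt le x u -> exists k, height_eq x k) ->
  (forall x k, lt le x u -> height_eq x k -> B k) ->
  (forall k, B k -> exists x, lt le x u /\ height_eq x k) ->
  order_iso (fun x => lt le x u) (lt le) B ltI.
Proof.
  intros total into onto. apply order_isoP.
  exists (fun x k => height_eq x k /\ lt le x u).
  assert (cmp : forall x x', lt le x u -> lt le x' u -> comparable le x x').
  { intros x x' [xu _] [x'u _]. exact (tree_comparable_below tree xu x'u). }
  constructor.
  - intros x k [hx xu]. eauto.
  - intros x xu. destruct (total x xu) as [k hx]. eauto.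
  - intros k Bk. destruct (onto k Bk) as (x & xu & hx). eauto.
  - intros x k k' [hk _] [hk' _]. exact (height_eq_fun hk hk').
  - intros x x' k [hx xu] [hx' x'u]. exact (height_eq_inj (cmp x x' xu x'u) hx hx').
  - intros x k x' k' [hx xu] [hx' x'u]. exact (height_eq_lt_iff (cmp x x' xu x'u) hx hx').
Qed.

Lemma height_eq_or_has_height u :
  (forall x, lt le x u -> exists k, height_eq x k) ->
  (exists k, height_eq u k) \/ has_height le u ltI.
Proof.
  intros total. destruct (classic (exists k, height_eq u k)) as [hu | no_height];
    [left; exact hu | right].
  pose proof wo as (_ & _ & ltI_total & wf).
  assert (attained : forall k, exists x, lt le x u /\ height_eq x k).
  { intro k. induction (wf k) as [k _ IH]. apply NNPP. intro unattained.
    apply no_height. exists k. apply heights_below_iso; [exact total | | exact IH].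
    intros x j xu hx. destruct (ltI_total j k) as [jk | [-> | kj]];
      [exact jk | exfalso; eauto |].
    destruct (height_eq_gt hx kj) as (x' & x'x & hx'). exfalso.
    apply unattained. exists x'. split; [exact (tree_lt_trans tree x'x xu) | exact hx']. }
  apply heights_below_iso; auto.
Qed.

Lemma has_height_le_of_not_below s :
  ~ height_below le s ltI -> exists t, le t s /\ has_height le t ltI.
Proof.
  pose proof tree as (le_refl & _ & le_trans & _).
  enough (dichotomy : forall s, (exists k, height_eq s k) \/
                                exists t, le t s /\ has_height le t ltI).
  { intro s_high.
    destruct (dichotomy s) as [s_low | found]; [contradiction | exact found]. }
  intro u. induction (order_tree_lt_wf tree u) as [u _ IH].
  destruct (classic (exists x, lt le x u /\ exists t, le t x /\ has_height le t ltI))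
    as [(x & xu & t & tx & ht) | none].
  - right. exists t. split; [exact (le_trans _ _ _ tx (proj1 xu)) | exact ht].
  - destruct (@height_eq_or_has_height u) as [hu | hu]; [| left; exact hu | right; eauto].
    intros x xu. destruct (IH x xu) as [hx | hx]; [exact hx | exfalso; eauto].
Qed.

Lemma has_height_lt_below t s :
  has_height le t ltI -> lt le s t -> height_below le s ltI.
Proof.
  intros ht st. apply order_isoP in ht as [R iso].
  destruct (iso_total iso st) as [k Rsk]. exists k.
  apply order_isoP. eexists.
  refine (iso_rel_restrict (@tree_lt_trans _ _ tree) _ iso st Rsk). auto.
Qed.

Lemma has_height_le_not_below t s :
  has_height le t ltI -> le t s -> ~ height_below le s ltI.
Proof.
  intros ht ts [k hs].
  destruct (classic (t = s)) as [<- | t_s].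
  - refine (iso_down_closed_not_initial_seg wo (B := fun _ => True) _ _ ht hs); auto.
  - destruct (height_eq_lt hs (conj ts t_s)) as (j & _ & hj).
    refine (iso_down_closed_not_initial_seg wo (B := fun _ => True) _ _ ht hj); auto.
Qed.

Lemma has_height_le_comparable t s : has_height le t ltI ->
  comparable le t s -> ~ height_below le s ltI -> le t s.
Proof.
  intros ht cmp s_high.
  destruct (comparable_lt_cases cmp) as [ts | [<- | st]].
  - apply ts.
  - apply tree.
  - exfalso. exact (s_high (has_height_lt_below ht st)).
Qed.

End Heights.

Section Reachability.
Variables (V : Type) (adj : V -> V -> Prop) (X : V -> Prop).

Lemma reach_in_mem v w : reach_in adj X v w -> X w.
Proof. intros []; assumption. Qed.

Lemma reach_in_trans u v w :
  reach_in adj X u v -> reach_in adj X v w -> reach_in adj X u w.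
Proof.
  intros uv vw. induction vw as [| w w' _ IH Xw' ww']; [exact uv|].
  exact (reach_step _ IH Xw' ww').
Qed.

Hypothesis adj_sym : forall a b, adj a b -> adj b a.

Lemma reach_in_sym v w : reach_in adj X v w -> reach_in adj X w v.
Proof.
  intros vw. induction vw as [Xv | w w' vw IH Xw' ww'].
  - exact (reach_refl _ _ _ Xv).
  - apply (reach_in_trans (v := w)); [| exact IH].
    exact (reach_step _ (reach_refl _ _ _ Xw') (reach_in_mem vw) (adj_sym ww')).
Qed.

Lemma reach_in_same_component v w : reach_in adj X v w ->
  forall u, reach_in adj X v u <-> reach_in adj X w u.
Proof.
  intros vw u. split; intro r.
  - exact (reach_in_trans (reach_in_sym vw) r).
  - exact (reach_in_trans vw r).
Qed.

End Reachability.

Section RayInflation.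
Variables (T : Type) (le E : T -> T -> Prop) (I : Type) (ltI : I -> I -> Prop).

Local Notation H := (ray_inflation le E).
Local Notation X := (fun v : T * nat => ~ height_below le (fst v) ltI).

Lemma ray_edge0_fst x y : ray_edge0 le E x y -> fst x = fst y \/ lt le (fst y) (fst x).
Proof.
  intros [[e _] | [[_ succ] | (_ & _ & _ & f & [_ enum] & fx)]].
  - left. exact e.
  - right. apply succ.
  - right. rewrite <- fx. apply (enum (f (snd x))). exists (snd x). reflexivity.
Qed.

Lemma ray_inflation_sym x y : H x y -> H y x.
Proof. unfold ray_inflation. tauto. Qed.

Lemma reach_in_column v s k : (forall n, X (s, n)) ->
  reach_in H X v (s, k) -> forall n, reach_in H X v (s, n).
Proof.
  intros Xs r.
  assert (r0 : reach_in H X v (s, 0)).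
  { induction k as [| k IH]; [exact r|].
    apply IH. apply (reach_step _ r (Xs k)). right. left. split; reflexivity. }
  intro n. induction n as [| n IH]; [exact r0|].
  apply (reach_step _ IH (Xs (S n))). left. left. split; reflexivity.
Qed.

Hypotheses (tree : order_tree le) (wo : wellorder ltI).

Lemma up_times_edge_closed t w w' : has_height le t ltI ->
  up_times le t w -> X w' -> H w w' -> up_times le t w'.
Proof.
  pose proof tree as (_ & _ & le_trans & _).
  unfold up_times. intros ht tw Xw' [ww' | w'w].
  - destruct (ray_edge0_fst ww') as [<- | w'w]; [exact tw |].
    apply (has_height_le_comparable tree ht); [| exact Xw'].
    exact (tree_comparable_below tree tw (proj1 w'w)).
  - destruct (ray_edge0_fst w'w) as [-> | ww']; [exact tw |].
    exact (le_trans _ _ _ tw (proj1 ww')).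
Qed.

Lemma reach_in_up_times t w : has_height le t ltI ->
  reach_in H X (t, 0) w -> up_times le t w.
Proof.
  intros ht r. induction r as [_ | w w' _ IH Xw' ww'].
  - apply tree.
  - exact (up_times_edge_closed ht IH Xw' ww').
Qed.

Hypotheses (graph : T_graph le E) (sparse_graph : sparse le E).

Lemma up_times_reach_in t : has_height le t ltI ->
  forall s, le t s -> forall n, reach_in H X (t, 0) (s, n).
Proof.
  pose proof tree as (_ & _ & le_trans & _).
  intros ht s. induction (order_tree_lt_wf tree s) as [s _ IH]. intro ts.
  assert (X_above : forall u n, le t u -> X (u, n))
    by (intros u n tu; exact (has_height_le_not_below tree wo ht tu)).
  destruct (classic (t = s)) as [<- | t_s].
  { apply (reach_in_column (k := 0)); [auto |].
    exact (reach_refl _ _ _ (X_above t 0 ts)). }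
  assert (lt_ts : lt le t s) by (split; assumption).
  destruct (classic (exists p, succ_of le p s)) as [[p ps] | lim].
  - intro n. apply (reach_step _ (IH p (proj1 ps) (succ_of_le_pred tree ps lt_ts) n)
                               (X_above s n ts)).
    right. right. left. split; [reflexivity | exact ps].
  - destruct (proj2 sparse_graph s lim (ex_intro _ t lt_ts)) as [f [f_incr f_enum]].
    pose proof graph as (_ & _ & _ & cofinal).
    destruct (cofinal t s lt_ts) as (u & su & tu).
    destruct (proj1 (f_enum u) su) as [j <-].
    intro n. set (k := max n j).
    assert (t_fk : le t (f k)).
    { destruct (classic (j = k)) as [<- | j_k]; [exact tu|].
      apply (le_trans _ _ _ tu), (f_incr j k). unfold k. lia. }
    assert (fk_s : lt le (f k) s)
      by exact (proj2 (proj2 (f_enum (f k)) (ex_intro _ k eq_refl))).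
    apply (reach_in_column (k := k)); [auto |].
    apply (reach_step _ (IH (f k) fk_s t_fk k) (X_above s k ts)).
    right. right. right. split; [reflexivity |]. split; [exact lim |].
    split; [exists t; exact lt_ts |]. exists f. split; [split; assumption | reflexivity].
Qed.

Lemma up_times_iff_reach_in t : has_height le t ltI ->
  forall w, up_times le t w <-> reach_in H X (t, 0) w.
Proof.
  intros ht [s n]. split.
  - intro ts. exact (up_times_reach_in ht ts n).
  - exact (reach_in_up_times ht).
Qed.

End RayInflation.

Theorem lemma6p3 (T : Type) (le : T -> T -> Prop) (E : T -> T -> Prop)
  (I : Type) (ltI : I -> I -> Prop) :
  order_tree le ->
  height_le_omega1 le ->
  T_graph le E ->
  sparse le E ->
  wellorder ltI ->
  countable_type I ->
  (* the vertex set of H - (T^{<i} x N) *)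
  let X := fun v : T * nat => ~ height_below le (fst v) ltI in
  let H := ray_inflation le E in
  (forall t, has_height le t ltI -> is_component H X (up_times le t)) /\
  (forall t t', has_height le t ltI -> has_height le t' ltI ->
     (forall v, up_times le t v <-> up_times le t' v) -> t = t') /\
  (forall C, is_component H X C ->
     exists t, has_height le t ltI /\ forall v, C v <-> up_times le t v).
Proof.
  intros tree _ graph sparse_graph wo _ X H.
  pose proof tree as (le_refl & le_antisym & _).
  pose proof (up_times_iff_reach_in tree wo graph sparse_graph) as up_times_reach.
  split; [| split].
  - intros t ht. exists (t, 0). split.
    + exact (has_height_le_not_below tree wo ht (le_refl t)).
    + exact (up_times_reach t ht).
  - intros t t' _ _ same_up_set. apply le_antisym.
    + apply (same_up_set (t', 0)), le_refl.
    + apply (same_up_set (t, 0)), le_refl.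
  - intros C (v & Xv & C_reach).
    destruct (has_height_le_of_not_below tree wo Xv) as (t & tv & ht).
    exists t. split; [exact ht |]. intro w.
    rewrite C_reach, (up_times_reach t ht w). symmetry.
    apply reach_in_same_component; [exact (@ray_inflation_sym _ le E) |].
    exact (proj1 (up_times_reach t ht v) tv).
Qed.
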